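(* Let $D,\bar D$ be star tree metrics on the taxa $\{1,2,3,4\}$, where $D$ has pendant edge weights $a,d,c,e>0$ at leaves $1,2,3,4$ respectively and $\bar D$ has pendant edge weights $\bar a,\bar d,\bar c,\bar e>0$ at leaves $1,2,3,4$. Define $s=\bar D_{13}-D_{13}$, $t=\bar D_{24}-D_{24}$, $x=\bar D_{14}-D_{14}$, $y=\bar D_{23}-D_{23}$, $u=\bar D_{12}-D_{12}$, $w=\bar D_{34}-D_{34}$ (so e.g. $\bar a+\bar c=a+c+s$), and write $z^+=\max\{z,0\}$. Let $T=D\oplus\bar D$. Then $T$ is a tree metric realized by the quartet tree $(12|34)$ with internal edge of positive weight if and only if $$u^+ + w^+ < s^+ + t^+ = x^+ + y^+.$$
   Context: The tropical mixture is the entrywise maximum $(D\oplus\bar D)_{pq}=\max\{D_{pq},\bar D_{pq}\}$. A star tree metric on $\{1,2,3,4\}$ is a matrix with $D_{pq}=w_p+w_q$ ($p\neq q$), zero diagonal, for positive edge weights $w_p$. The quartet tree $(12|34)$ is the tree in which leaves $1,2$ are attached to one endpoint of an internal edge and leaves $3,4$ to the other endpoint. *)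

From HB Require Import structures.
From mathcomp Require Import all_boot all_order all_algebra.
Set Implicit Arguments. Unset Strict Implicit. Unset Printing Implicit Defensive.
Import Order.TTheory GRing.Theory Num.Theory.
Local Open Scope ring_scope.

(* Taxa 1,2,3,4 are represented by the ordinals 0,1,2,3 of 'I_4. *)
Definition taxon (k : nat) : 'I_4 := inord k.-1.

Definition leafw (R : realFieldType) (w1 w2 w3 w4 : R) : 'I_4 -> R :=
  fun i => nth 0 [:: w1; w2; w3; w4] i.

Definition star_metric (R : realFieldType) (w : 'I_4 -> R) : 'I_4 -> 'I_4 -> R :=
  fun p q => if p == q then 0 else w p + w q.

Definition tmix (R : realFieldType) (D Db : 'I_4 -> 'I_4 -> R) : 'I_4 -> 'I_4 -> R :=
  fun p q => Num.max (D p q) (Db p q).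

(* Side of the split 12|34: leaves 1,2 (ordinals 0,1) vs leaves 3,4. *)
Definition side12 (p : 'I_4) : bool := (p < 2)%N.

Definition quartet_metric (R : realFieldType) (w : 'I_4 -> R) (l : R)
  : 'I_4 -> 'I_4 -> R :=
  fun p q => if p == q then 0
             else w p + w q + (if side12 p == side12 q then 0 else l).

Definition realized_by_12_34_pos (R : realFieldType) (T : 'I_4 -> 'I_4 -> R) : Prop :=
  exists (w : 'I_4 -> R) (l : R),
    (forall i, 0 < w i) /\ 0 < l /\ (forall p q, T p q = quartet_metric w l p q).

Definition posp (R : realFieldType) (z : R) : R := Num.max z 0.

(* Since T_pq = D_pq + (Dbar_pq - D_pq)^+ and the three pairings of the four
   taxa all have D-sum a + c + d + e in a star tree, the four-point condition
   for the split 12|34 in T reads u^+ + w^+ < s^+ + t^+ = x^+ + y^+.  The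
   pendant edges of the realizing quartet are then automatically positive:
   their lengths are Gromov products of T, and T_pq + T_pr - T_qr is at least
   the same expression for D or for Dbar (whichever attains T_qr), which is
   twice a pendant weight of a star tree. *)

From HB Require Import structures.
From mathcomp Require Import all_boot all_order all_algebra.
From mathcomp Require Import lra.

Set Implicit Arguments.
Unset Strict Implicit.
Unset Printing Implicit Defensive.
Import Order.TTheory GRing.Theory Num.Theory.
Local Open Scope ring_scope.

Lemma taxon1E : taxon 1 = Ordinal (isT : (0 < 4)%N).
Proof. by apply/val_inj; rewrite /= inordK. Qed.

Lemma taxon2E : taxon 2 = Ordinal (isT : (1 < 4)%N).
Proof. by apply/val_inj; rewrite /= inordK. Qed.

Lemma taxon3E : taxon 3 = Ordinal (isT : (2 < 4)%N).
Proof. by apply/val_inj; rewrite /= inordK. Qed.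

Lemma taxon4E : taxon 4 = Ordinal (isT : (3 < 4)%N).
Proof. by apply/val_inj; rewrite /= inordK. Qed.

Definition taxonE := (taxon1E, taxon2E, taxon3E, taxon4E).

Lemma taxonP (p : 'I_4) :
  [\/ p = taxon 1, p = taxon 2, p = taxon 3 | p = taxon 4].
Proof.
rewrite !taxonE; case: p => [[|[|[|[|m]]]] lt_m4] //.
- by apply: Or41; apply/val_inj.
- by apply: Or42; apply/val_inj.
- by apply: Or43; apply/val_inj.
- by apply: Or44; apply/val_inj.
Qed.

Section Dissimilarity.

Variable R : realFieldType.
Implicit Types (D T : 'I_4 -> 'I_4 -> R) (w : 'I_4 -> R).

Lemma leafw_gt0 (w1 w2 w3 w4 : R) :
  0 < w1 -> 0 < w2 -> 0 < w3 -> 0 < w4 -> forall i, 0 < leafw w1 w2 w3 w4 i.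
Proof. by move=> ? ? ? ? i; case: (taxonP i) => ->; rewrite taxonE. Qed.

Lemma maxr_posp (x y : R) : Num.max x y = x + posp (y - x).
Proof. by rewrite /posp addr_maxr addrCA subrr !addr0 maxC. Qed.

(* Twice the Gromov product (q|r)_p. *)
Definition gromov T (p q r : 'I_4) : R := T p q + T p r - T q r.

Lemma quartet_metric_four_point w l :
  let T := quartet_metric w l in
  T (taxon 1) (taxon 3) + T (taxon 2) (taxon 4)
    = T (taxon 1) (taxon 4) + T (taxon 2) (taxon 3) /\
  T (taxon 1) (taxon 2) + T (taxon 3) (taxon 4)
    = T (taxon 1) (taxon 3) + T (taxon 2) (taxon 4) - 2 * l.
Proof. by rewrite /quartet_metric !taxonE /=; split; lra. Qed.

Lemma realized_by_12_34_four_point T : realized_by_12_34_pos T ->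
  T (taxon 1) (taxon 3) + T (taxon 2) (taxon 4)
    = T (taxon 1) (taxon 4) + T (taxon 2) (taxon 3) /\
  T (taxon 1) (taxon 2) + T (taxon 3) (taxon 4)
    < T (taxon 1) (taxon 3) + T (taxon 2) (taxon 4).
Proof.
case=> w [l [_ [l_gt0 T_quartet]]]; rewrite !T_quartet.
have [-> ->] := quartet_metric_four_point w l; split=> //; lra.
Qed.

Section FourPointRealization.

Variable T : 'I_4 -> 'I_4 -> R.
Hypothesis T_refl : forall p, T p p = 0.
Hypothesis T_sym : forall p q, T p q = T q p.

Let w := leafw (gromov T (taxon 1) (taxon 2) (taxon 3) / 2)
               (gromov T (taxon 2) (taxon 1) (taxon 3) / 2)
               (gromov T (taxon 3) (taxon 4) (taxon 1) / 2)
               (gromov T (taxon 4) (taxon 3) (taxon 1) / 2).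
Let l := (T (taxon 1) (taxon 3) + T (taxon 2) (taxon 4)
          - T (taxon 1) (taxon 2) - T (taxon 3) (taxon 4)) / 2.

Lemma four_point_realized_by_12_34 :
  0 < gromov T (taxon 1) (taxon 2) (taxon 3) ->
  0 < gromov T (taxon 2) (taxon 1) (taxon 3) ->
  0 < gromov T (taxon 3) (taxon 4) (taxon 1) ->
  0 < gromov T (taxon 4) (taxon 3) (taxon 1) ->
  T (taxon 1) (taxon 3) + T (taxon 2) (taxon 4)
    = T (taxon 1) (taxon 4) + T (taxon 2) (taxon 3) ->
  T (taxon 1) (taxon 2) + T (taxon 3) (taxon 4)
    < T (taxon 1) (taxon 3) + T (taxon 2) (taxon 4) ->
  realized_by_12_34_pos T.
Proof.
move=> g1 g2 g3 g4 eq_pairs lt_pairs; exists w, l; split; [|split].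
- by apply: leafw_gt0; apply: divr_gt0.
- by apply: divr_gt0 => //; lra.
have T_upper := (T_sym (taxon 2) (taxon 1), T_sym (taxon 3) (taxon 1),
  T_sym (taxon 4) (taxon 1), T_sym (taxon 3) (taxon 2),
  T_sym (taxon 4) (taxon 2), T_sym (taxon 4) (taxon 3)).
move=> p q; case: (taxonP p) => ->; case: (taxonP q) => ->;
  rewrite /w /l /gromov ?T_refl ?T_upper /quartet_metric /leafw;
  rewrite !taxonE /= in eq_pairs *; lra.
Qed.

End FourPointRealization.

Lemma star_metric_refl w p : star_metric w p p = 0.
Proof. by rewrite /star_metric eqxx. Qed.

Lemma star_metric_sym w p q : star_metric w p q = star_metric w q p.
Proof. by rewrite /star_metric eq_sym addrC. Qed.

Lemma star_metric_gromov w p q r : p != q -> p != r -> q != r ->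
  gromov (star_metric w) p q r = 2 * w p.
Proof. by rewrite /gromov /star_metric => /negbTE-> /negbTE-> /negbTE->; lra. Qed.

Lemma star_metric_pairings w :
  let D := star_metric w in
  D (taxon 1) (taxon 2) + D (taxon 3) (taxon 4)
    = D (taxon 1) (taxon 3) + D (taxon 2) (taxon 4) /\
  D (taxon 1) (taxon 3) + D (taxon 2) (taxon 4)
    = D (taxon 1) (taxon 4) + D (taxon 2) (taxon 3).
Proof. by rewrite /star_metric !taxonE /=; split; lra. Qed.

Lemma tmix_refl D Db :
  (forall p, D p p = 0) -> (forall p, Db p p = 0) ->
  forall p, tmix D Db p p = 0.
Proof. by move=> D0 Db0 p; rewrite /tmix D0 Db0 maxxx. Qed.

Lemma tmix_sym D Db :
  (forall p q, D p q = D q p) -> (forall p q, Db p q = Db q p) ->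
  forall p q, tmix D Db p q = tmix D Db q p.
Proof. by move=> Dsym Dbsym p q; rewrite /tmix Dsym Dbsym. Qed.

Lemma gromov_tmix_gt0 D Db p q r :
  0 < gromov D p q r -> 0 < gromov Db p q r -> 0 < gromov (tmix D Db) p q r.
Proof.
rewrite /gromov /tmix !maxEle.
by case: (leP (D p q)); case: (leP (D p r)); case: (leP (D q r)); lra.
Qed.

End Dissimilarity.

Theorem proposition3p1 (R : realFieldType) (a d c e ab db cb eb : R) :
  0 < a -> 0 < d -> 0 < c -> 0 < e ->
  0 < ab -> 0 < db -> 0 < cb -> 0 < eb ->
  let D := star_metric (leafw a d c e) in
  let Db := star_metric (leafw ab db cb eb) in
  let s := Db (taxon 1) (taxon 3) - D (taxon 1) (taxon 3) in
  let t := Db (taxon 2) (taxon 4) - D (taxon 2) (taxon 4) in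
  let x := Db (taxon 1) (taxon 4) - D (taxon 1) (taxon 4) in
  let y := Db (taxon 2) (taxon 3) - D (taxon 2) (taxon 3) in
  let u := Db (taxon 1) (taxon 2) - D (taxon 1) (taxon 2) in
  let w := Db (taxon 3) (taxon 4) - D (taxon 3) (taxon 4) in
  let T := tmix D Db in
  realized_by_12_34_pos T <->
  (posp u + posp w < posp s + posp t /\ posp s + posp t = posp x + posp y).
Proof.
move=> ha hd hc he hab hdb hcb heb D Db s t x y u w T.
have T_refl : forall p, T p p = 0.
  by apply: tmix_refl; apply: star_metric_refl.
have T_sym : forall p q, T p q = T q p.
  by apply: tmix_sym; apply: star_metric_sym.
have T_gromov (p q r : 'I_4) :
    p != q -> p != r -> q != r -> 0 < gromov T p q r.
  move=> pq pr qr; apply: gromov_tmix_gt0; rewrite star_metric_gromov //;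
    by apply: mulr_gt0; last exact: leafw_gt0.
have [D_12_13 D_13_14] := star_metric_pairings (leafw a d c e).
rewrite -/D in D_12_13 D_13_14.
have T_posp p q : T p q = D p q + posp (Db p q - D p q) by exact: maxr_posp.
split=> [/realized_by_12_34_four_point | [lt_pairs eq_pairs]].
  by rewrite !T_posp; lra.
apply: four_point_realized_by_12_34 => //;
  try by apply: T_gromov; rewrite !taxonE.
all: by rewrite !T_posp; lra.
Qed.
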